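(* Let $G$ be a simple graph on $n$ vertices with $cM_2(G)\ge cM_2(H)$ for every simple graph $H$ on $n$ vertices, and let $F$, $X$, $Y$, $N^+_F$ be as defined in the context. If $u,v\in X$ and $d_G(u)\ge d_G(v)$, then $N^+_F(u)\cap Y\supseteq N^+_F(v)\cap Y$.
   Context: All graphs are finite and simple; $d_G(u)$ is the degree of $u$ and $cM_2(G)=\sum_{uv\in E(G)}|d_G(u)^2-d_G(v)^2|$. The canonical mixed graph $F$ of $G$ has vertex set $V(G)$; for each edge $uv\in E(G)$: if $d_G(u)>d_G(v)$ then $F$ contains the arc $\overrightarrow{uv}$, and if $d_G(u)=d_G(v)$ then $F$ contains the undirected edge $uv$. $d^+_F(u)$ (resp. $d^-_F(u)$) is the number of arcs of $F$ with tail (resp. head) $u$; $N^+_F(u)=\{w:\overrightarrow{uw}\in A(F)\}$. $X=\{u\in V(G): d^+_F(u)\ge d^-_F(u)\}$ and $Y=\{u\in V(G): d^+_F(u)< d^-_F(u)\}$. *)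

From mathcomp Require Import all_boot all_order.
Set Implicit Arguments. Unset Strict Implicit. Unset Printing Implicit Defensive.

Definition simple_graph (n : nat) (e : rel 'I_n) : Prop :=
  symmetric e /\ irreflexive e.

Definition deg n (e : rel 'I_n) (u : 'I_n) : nat := #|[set w | e u w]|.

Definition absdiff (a b : nat) : nat := (a - b) + (b - a).

Definition cM2 n (e : rel 'I_n) : nat :=
  \sum_(u : 'I_n) \sum_(v : 'I_n | (u < v) && e u v)
     absdiff (deg e u ^ 2) (deg e v ^ 2).

(* arcs of the canonical mixed graph F: arc u -> w iff uw edge and d(u) > d(w) *)
Definition arcF n (e : rel 'I_n) (u w : 'I_n) : bool := e u w && (deg e w < deg e u).

Definition outdegF n (e : rel 'I_n) (u : 'I_n) : nat := #|[set w | arcF e u w]|.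
Definition indegF n (e : rel 'I_n) (u : 'I_n) : nat := #|[set w | arcF e w u]|.

Definition Nplus n (e : rel 'I_n) (u : 'I_n) : {set 'I_n} := [set w | arcF e u w].

Definition Xset n (e : rel 'I_n) : {set 'I_n} := [set u | indegF e u <= outdegF e u].
Definition Yset n (e : rel 'I_n) : {set 'I_n} := [set u | outdegF e u < indegF e u].

(* Suppose w is an out-neighbour of v but uw is not an edge.  If uv is an
   edge, then since d(v) <= d(u) some neighbour z of u is not adjacent to v;
   moving the edge vw to uw, and separately the edge uz to vz, yields two graphs
   whose cM_2 values sum to more than 2 cM_2(G), by a convexity estimate on
   |d(x)^2 - d(y)^2|.  This contradicts maximality.  If uv is not an edge,
   adding it does not decrease cM_2, because raising d(u) gains at least
   2d(u)+1 on each out-arc of u and loses at most that on each in-arc, and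
   u, v are in X; so G + uv is again extremal and the first case applies to it. *)

From mathcomp Require Import all_boot all_order all_algebra zify ring lra.
Import Order.TTheory GRing.Theory Num.Theory.
Set Implicit Arguments. Unset Strict Implicit. Unset Printing Implicit Defensive.
Local Open Scope ring_scope.

Definition sqgap (p q : int) : int := `|p ^+ 2 - q ^+ 2|.

Lemma sqgapC p q : sqgap p q = sqgap q p.
Proof. by rewrite /sqgap -normrN opprB. Qed.

Lemma sqgap_ge p q : p ^+ 2 - q ^+ 2 <= sqgap p q.
Proof. exact: ler_norm. Qed.

Lemma sqgapE p q : 0 <= p - q -> 0 <= p + q -> sqgap p q = p ^+ 2 - q ^+ 2.
Proof.
move=> pq_ge0 pDq_ge0; apply: ger0_norm.
have -> : p ^+ 2 - q ^+ 2 = (p - q) * (p + q) by ring.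
exact: mulr_ge0.
Qed.
Arguments sqgapE : clear implicits.

Lemma sqgap_second_diff a t : 0 <= a -> 0 <= t ->
  -2 <= sqgap (a + 1) t + sqgap (a - 1) t - 2 * sqgap a t.
Proof.
move=> a_ge0 t_ge0; have := sqgap_ge (a + 1) t; have := sqgap_ge (a - 1) t.
have := sqgap_ge t (a + 1); have := sqgap_ge t (a - 1); rewrite !(sqgapC t).
case: (lerP t a) => ta; first by rewrite (sqgapE a t); lia.
by rewrite (sqgapC a t) (sqgapE t a); lia.
Qed.

Lemma sqgap_first_diff (a t : int) : 0 <= a -> 0 <= t ->
  (2 * a + 1) * ((t < a)%R%:R - (a < t)%R%:R) <= sqgap (a + 1) t - sqgap a t.
Proof.
move=> a_ge0 t_ge0; have := sqgap_ge (a + 1) t; have := sqgap_ge t (a + 1).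
rewrite (sqgapC t); case: (ltrgtP t a) => ta.
- by rewrite (sqgapE a t); lia.
- by rewrite (sqgapC a t) (sqgapE t a); lia.
- have a_a : sqgap a a = 0 by rewrite /sqgap subrr.
  by rewrite ta a_a; lia.
Qed.

(* The net gain of the two rewirings in [rewire_pair_gain]; a, b, c, z are the
   degrees of u, v, w, z there. *)
Lemma sqgap_rewire_gain_pos a b c z : 0 <= c -> c < b -> b <= a -> 0 <= z ->
  0 < (sqgap (a + 1) (b - 1) + sqgap (a - 1) (b + 1) - 2 * sqgap a b)
      + (sqgap (a + 1) z - 2 * sqgap a z + sqgap (b + 1) z)
      + (sqgap (a + 1) c + sqgap (b + 1) c - 2 * sqgap b c) + 8 - 2 * a - 2 * b.
Proof.
move=> c_ge0 cb ba z_ge0.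
rewrite (sqgapE (a + 1) (b - 1)) ?(sqgapE a b) ?(sqgapE (a + 1) c) ?(sqgapE (b + 1) c)
  ?(sqgapE b c); try lia.
have := sqgap_ge (a - 1) (b + 1); have := sqgap_ge (b + 1) z.
case: (lerP z a) => za.
  by rewrite (sqgapE a z) ?(sqgapE (a + 1) z); lia.
rewrite !(sqgapC _ z) (sqgapE z a) ?(sqgapE z (a + 1)) ?(sqgapE z (b + 1)); try lia.
case: (lerP a b) => ab.
  have -> : a = b by lia.
  by rewrite sqgapC (sqgapE (b + 1) (b - 1)); lia.
have : 0 <= (a + b) * (a - b - 1) by apply: mulr_ge0; lia.
lia.
Qed.

Definition degz n (e : rel 'I_n) (x : 'I_n) : int := (deg e x)%:Z.

Definition toggle n (e : rel 'I_n) (a b : 'I_n) : rel 'I_n :=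
  fun x y => if ((x == a) && (y == b)) || ((x == b) && (y == a)) then ~~ e x y else e x y.

(* Replaces the edge ab by the edge cb. *)
Definition rewire n (e : rel 'I_n) (a b c : 'I_n) : rel 'I_n := toggle (toggle e a b) c b.

Section Toggle.
Variables (n : nat) (e : rel 'I_n).
Hypothesis e_simple : simple_graph e.

Lemma simple_edge_neq x y : e x y -> x != y.
Proof. by case: e_simple => _ irr; apply: contraTneq => ->; rewrite irr. Qed.

Lemma degz_add_neighbor x p (g : rel 'I_n) : ~~ e x p ->
  (forall y, g x y = (y == p) || e x y) -> degz g x = degz e x + 1.
Proof.
move=> nexp gx; rewrite /degz /deg.
have -> : [set y | g x y] = p |: [set y | e x y] by apply/setP => y; rewrite !inE gx.
by rewrite cardsU1 inE (negbTE nexp); lia.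
Qed.

Lemma toggleC a b x y : toggle e a b x y = toggle e b a x y.
Proof. by rewrite /toggle orbC. Qed.

Lemma deg_toggleC a b x : deg (toggle e a b) x = deg (toggle e b a) x.
Proof. by apply: eq_card => y; rewrite !inE toggleC. Qed.

Lemma toggle_off a b x y : x != a -> y != a -> toggle e a b x y = e x y.
Proof. by move=> /negbTE xa /negbTE ya; rewrite /toggle xa ya andbF. Qed.

Lemma toggle_row_other a b x y : x != a -> x != b -> toggle e a b x y = e x y.
Proof. by move=> /negbTE xa /negbTE xb; rewrite /toggle xa xb. Qed.

Lemma toggle_row a b y : a != b -> toggle e a b a y = if y == b then ~~ e a b else e a y.
Proof. by move=> ab; rewrite /toggle eqxx (negbTE ab) /=; case: eqP => [->|]. Qed.

Lemma toggle_simple a b : a != b -> simple_graph (toggle e a b).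
Proof.
case: e_simple => sym irr ab; split=> [x y|x].
  by rewrite /toggle (sym x y) orbC (andbC (y == b)) (andbC (y == a)).
have [->|xa] := eqVneq x a; last by rewrite toggle_off ?irr.
by rewrite toggleC toggle_off ?irr // eq_sym.
Qed.

Lemma deg_toggle_other a b x : x != a -> x != b -> deg (toggle e a b) x = deg e x.
Proof.
by move=> xa xb; apply: eq_card => y; rewrite !inE toggle_row_other.
Qed.

Lemma degz_toggle a b : a != b ->
  degz (toggle e a b) a = degz e a + (if e a b then -1 else 1).
Proof.
move=> ab; case: ifP => eab; last first.
  by apply: (degz_add_neighbor (p := b)) => [|y]; rewrite ?eab // toggle_row // eab; case: eqP.
rewrite /degz /deg.
have -> : [set y | toggle e a b a y] = [set y | e a y] :\ b.
  by apply/setP => y; rewrite !inE toggle_row //; case: eqP => [->|]; rewrite ?eab.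
by rewrite [in RHS](cardsD1 b) inE eab; lia.
Qed.

Lemma deg_toggle_add a b : a != b -> ~~ e a b -> deg (toggle e a b) a = (deg e a).+1.
Proof. by move=> ab /negbTE neab; have := degz_toggle ab; rewrite neab /degz; lia. Qed.
End Toggle.

Section Rewire.
Variables (n : nat) (e : rel 'I_n) (a b c : 'I_n).
Hypotheses (e_simple : simple_graph e) (eab : e a b) (necb : ~~ e c b) (cb : c != b).

Let ab : a != b. Proof. exact: simple_edge_neq eab. Qed.
Let ca : c != a. Proof. by apply: contraTneq eab => <-. Qed.
Let ac : a != c. Proof. by rewrite eq_sym. Qed.
Let ba : b != a. Proof. by rewrite eq_sym. Qed.
Let bc : b != c. Proof. by rewrite eq_sym. Qed.
Let ebc : e b c = false. Proof. by case: e_simple => sym _; rewrite sym (negbTE necb). Qed.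
Let tcb : toggle e a b c b = false.
Proof. by rewrite toggle_row_other // (negbTE necb). Qed.

Lemma rewire_simple : simple_graph (rewire e a b c).
Proof. by rewrite /rewire; apply: toggle_simple => //; apply: toggle_simple. Qed.

Lemma rewire_other x y : x != a -> x != c -> y != a -> y != c -> rewire e a b c x y = e x y.
Proof. by move=> xa xc ya yc; rewrite /rewire !toggle_off. Qed.

Lemma rewire_from y : rewire e a b c a y = (y != b) && e a y.
Proof. by rewrite /rewire toggle_row_other // toggle_row // eab; case: eqP. Qed.

Lemma rewire_to y : rewire e a b c c y = (y == b) || e c y.
Proof. by rewrite /rewire toggle_row // tcb toggle_row_other //; case: eqP. Qed.

Lemma degz_rewire_from : degz (rewire e a b c) a = degz e a - 1.
Proof. by rewrite /degz deg_toggle_other // -/(degz _ a) degz_toggle // eab. Qed.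

Lemma degz_rewire_to : degz (rewire e a b c) c = degz e c + 1.
Proof. by rewrite degz_toggle // tcb /degz deg_toggle_other. Qed.

Lemma deg_rewire_other x : x != a -> x != c -> deg (rewire e a b c) x = deg e x.
Proof.
move=> xa xc; have [->|xb] := eqVneq x b; last by rewrite !deg_toggle_other.
suff: degz (rewire e a b c) b = degz e b by case.
rewrite /degz /rewire deg_toggleC -/(degz _ b) degz_toggle // toggle_off //.
rewrite ebc /degz deg_toggleC -/(degz _ b) degz_toggle //.
by case: e_simple => sym _; rewrite sym eab subrK.
Qed.
End Rewire.

Lemma sum_symmetric_two_rows (V : zmodType) n (D : 'I_n -> 'I_n -> V) u v :
  u != v -> (forall x y, D x y = D y x) -> D u u = 0 -> D v v = 0 ->
  (forall x y, x != u -> x != v -> y != u -> y != v -> D x y = 0) ->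
  \sum_x \sum_y D x y = (\sum_y D u y + \sum_y D v y - D u v) *+ 2.
Proof.
move=> uv Dsym Duu Dvv D0.
have vu : v != u by rewrite eq_sym.
have split2 x : \sum_y D x y = D x u + (D x v + \sum_(y | (y != u) && (y != v)) D x y).
  by rewrite (bigD1 u) //= (bigD1 v).
rewrite [LHS](bigD1 u) //= [X in _ + X](bigD1 v) //=.
rewrite [X in _ + (_ + X)](eq_bigr (fun x => D u x + D v x)); last first.
  move=> x /andP[xu xv]; rewrite split2 big1 ?addr0 ?(Dsym x) //.
  by move=> y /andP[yu yv]; apply: D0.
rewrite big_split /= !split2 Duu Dvv (Dsym v u) !add0r.
set d := D u v; set Su := \sum_(i | _) D u i; set Sv := \sum_(i | _) D v i.
by rewrite !addrA [in RHS]addrAC addrK mulr2n !addrA [d + Su + d + Sv]addrAC.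
Qed.

Definition ew n (e : rel 'I_n) (x y : 'I_n) : int :=
  if e x y then sqgap (degz e x) (degz e y) else 0.

Definition row_gain n (h e : rel 'I_n) (x : 'I_n) : int := \sum_y (ew h x y - ew e x y).

Section EdgeWeights.
Variables (n : nat) (e : rel 'I_n).
Hypothesis e_simple : simple_graph e.

Lemma ew_ge0 x y : 0 <= ew e x y.
Proof. by rewrite /ew; case: ifP. Qed.

Lemma ewC x y : ew e x y = ew e y x.
Proof. by case: e_simple => sym _; rewrite /ew sym sqgapC. Qed.

Lemma ew_diag x : ew e x x = 0.
Proof. by case: e_simple => _ irr; rewrite /ew irr. Qed.

Lemma sum_ew_cM2 : \sum_x \sum_y ew e x y = (cM2 e)%:Z *+ 2.
Proof.
have ew_split x y :
    ew e x y = (if (x < y)%N then ew e x y else 0) + (if (y < x)%N then ew e y x else 0).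
  case: ltngtP => [_|_|/val_inj ->]; rewrite ?addr0 ?add0r ?ew_diag //; exact: ewC.
under eq_bigr do under eq_bigr do rewrite ew_split.
under eq_bigr do rewrite big_split /=.
rewrite big_split /= [X in _ + X]exchange_big /= mulr2n; congr (_ + _).
all: rewrite /cM2 -natz natr_sum; apply: eq_big => // x _; rewrite natr_sum [RHS]big_mkcond /=.
all: apply: eq_bigr => y _; rewrite /ew; case: (x < y)%N; case: (e x y) => //=.
all: by rewrite natz /absdiff /sqgap /degz; lia.
Qed.
End EdgeWeights.

Lemma cM2_local_change n (e h : rel 'I_n) u v :
  simple_graph e -> simple_graph h -> u != v ->
  (forall x y, x != u -> x != v -> y != u -> y != v -> h x y = e x y) ->
  (forall x, x != u -> x != v -> deg h x = deg e x) ->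
  (cM2 h)%:Z - (cM2 e)%:Z = row_gain h e u + row_gain h e v - (ew h u v - ew e u v).
Proof.
move=> e_simple h_simple uv hE dE.
have D_sum : \sum_x \sum_y (ew h x y - ew e x y) = ((cM2 h)%:Z - (cM2 e)%:Z) *+ 2.
  by under eq_bigr do rewrite sumrB; rewrite sumrB !sum_ew_cM2 // mulrnBl.
rewrite (sum_symmetric_two_rows (u := u) (v := v)) ?ew_diag ?subrr // in D_sum; last 2 first.
- by move=> x y; rewrite !(ewC _ x).
- by move=> x y xu xv yu yv; rewrite /ew hE // /degz !dE // subrr.
by apply/eqP; rewrite -(eqr_pMn2r (isT : 0 < 2)%N) -D_sum.
Qed.

Lemma sumr_bool_card (R : pzSemiRingType) n (P : pred 'I_n) :
  \sum_y (P y)%:R = #|[set y | P y]|%:R :> R.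
Proof.
by rewrite -sum1dep_card natr_sum [RHS]big_mkcond; apply: eq_bigr => y _; case: (P y).
Qed.

(* Raising d(x) from a to a + 1 changes the weight of an out-arc of x by at
   least 2a + 1 and that of an in-arc by at least -(2a + 1). *)
Lemma row_gain_add_edge n (e g : rel 'I_n) x p :
  simple_graph e -> ~~ e x p -> (forall y, g x y = (y == p) || e x y) ->
  (forall y, y != x -> y != p -> deg g y = deg e y) ->
  (indegF e x <= outdegF e x)%N -> ew g x p <= row_gain g e x.
Proof.
move=> e_simple nexp gx dE in_le_out; have [sym _] := e_simple.
have dx := degz_add_neighbor nexp gx; set a := degz e x in dx.
have term y : (2 * a + 1) * ((arcF e x y)%:R - (arcF e y x)%:R)
    <= ew g x y - ew e x y - (if y == p then ew g x p else 0).
  have [->|yp] := eqVneq y p.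
    by rewrite /arcF /ew (sym p x) (negbTE nexp) /= !subr0 subrr mulr0.
  rewrite /arcF /ew gx (negbTE yp) /=; case exy: (e x y); last by rewrite sym exy mulr0 !subr0.
  have yx : y != x by rewrite eq_sym (simple_edge_neq e_simple exy).
  rewrite sym exy dx /degz dE // -!ltz_nat subr0.
  exact: sqgap_first_diff.
have : \sum_y (2 * a + 1) * ((arcF e x y)%:R - (arcF e y x)%:R)
    <= \sum_y (ew g x y - ew e x y - (if y == p then ew g x p else 0)).
  by apply: ler_sum => y _; exact: term.
rewrite -mulr_sumr sumrB !sumr_bool_card sumrB -big_mkcond big_pred1_eq.
have : 0 <= (2 * a + 1) * ((outdegF e x)%:R - (indegF e x)%:R).
  apply: mulr_ge0; first by rewrite /a /degz; lia.
  by rewrite !natz subr_ge0 lez_nat.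
by rewrite /outdegF /indegF => /le_trans ge0 /ge0; rewrite subr_ge0.
Qed.

Lemma cM2_add_edge_ge n (e : rel 'I_n) u v : simple_graph e -> u != v -> ~~ e u v ->
  u \in Xset e -> v \in Xset e -> (cM2 e <= cM2 (toggle e u v))%N.
Proof.
move=> e_simple uv neuv; rewrite !inE => Xu Xv; have [sym _] := e_simple.
set g := toggle e u v; have g_simple : simple_graph g by exact: toggle_simple.
have vu : v != u by rewrite eq_sym.
have nevu : ~~ e v u by rewrite sym.
have gu y : g u y = (y == v) || e u y by rewrite /g toggle_row // (negbTE neuv); case: eqP.
have gv y : g v y = (y == u) || e v y.
  by rewrite /g toggleC toggle_row // (negbTE nevu); case: eqP.
have dE y : y != u -> y != v -> deg g y = deg e y by exact: deg_toggle_other.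
have Ru := row_gain_add_edge e_simple neuv gu dE Xu.
have Rv := row_gain_add_edge e_simple nevu gv (fun y yv yu => dE y yu yv) Xv.
have := cM2_local_change e_simple g_simple uv (fun x y xu _ yu _ => toggle_off e v xu yu) dE.
have ew_uv0 : ew e u v = 0 by rewrite /ew (negbTE neuv).
have := ew_ge0 g u v; rewrite (ewC g_simple v u) in Rv => ew_uv_ge0.
by rewrite ew_uv0 -lez_nat -subr_ge0 => ->; lia.
Qed.

Lemma ler_sum3 (R : numDomainType) n (G : 'I_n -> R) p q r : p != q -> p != r -> q != r ->
  (forall y, y != p -> y != q -> y != r -> 0 <= G y) -> G p + G q + G r <= \sum_y G y.
Proof.
move=> pq pr qr G_ge0.
have [qp rp rq] : [/\ q != p, r != p & r != q] by rewrite !(eq_sym r) eq_sym.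
rewrite (bigD1 p) //= (bigD1 q) //= (bigD1 r) /=; last by rewrite rp rq.
by rewrite !addrA lerDl sumr_ge0 // => y /andP[/andP[yp yq] yr]; apply: G_ge0.
Qed.

Lemma row_gain_rewire_pair n (e : rel 'I_n) x y p q :
  simple_graph e -> x != p -> y != q -> e x y -> e y p -> ~~ e x p -> e x q -> ~~ e y q ->
  let a := degz e x in let b := degz e y in
  sqgap (a + 1) (b - 1) + sqgap (a - 1) (b + 1) - 2 * sqgap a b
    + sqgap (a + 1) (degz e p) + sqgap (a + 1) (degz e q) - 2 * sqgap a (degz e q)
    + 4 - 2 * a
  <= row_gain (rewire e y p x) e x + row_gain (rewire e x q y) e x.
Proof.
move=> e_simple xp yq exy eyp nexp exq neyq /=; set a := degz e x; set b := degz e y.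
have yx : y != x by rewrite eq_sym (simple_edge_neq e_simple exy).
have yp := simple_edge_neq e_simple eyp.
have pq : p != q by apply: contraTneq eyp => ->.
set g1 := rewire e y p x; set g2 := rewire e x q y.
have g1x t : g1 x t = (t == p) || e x t by rewrite /g1 rewire_to.
have g2x t : g2 x t = (t != q) && e x t by rewrite /g2 rewire_from.
have d1x : degz g1 x = a + 1 by rewrite /g1 degz_rewire_to.
have d1y : degz g1 y = b - 1 by rewrite /g1 degz_rewire_from.
have d2x : degz g2 x = a - 1 by rewrite /g2 degz_rewire_from.
have d2y : degz g2 y = b + 1 by rewrite /g2 degz_rewire_to.
have d1 t : t != y -> t != x -> degz g1 t = degz e t.
  by move=> ty tx; rewrite /g1 /degz deg_rewire_other.
have d2 t : t != x -> t != y -> degz g2 t = degz e t.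
  by move=> tx ty; rewrite /g2 /degz deg_rewire_other.
(* The extra 2 per neighbour of x absorbs the second difference of sqgap, which is >= -2. *)
pose G t := ew g1 x t - ew e x t + (ew g2 x t - ew e x t) + 2 * (e x t)%:R.
have sumG : \sum_t G t = row_gain g1 e x + row_gain g2 e x + 2 * a.
  by rewrite /row_gain /a /degz /deg -natz -sumr_bool_card mulr_sumr -!big_split.
have Gy : G y = sqgap (a + 1) (b - 1) + sqgap (a - 1) (b + 1) - 2 * sqgap a b + 2.
  by rewrite /G /ew g1x g2x (negbTE yp) (negbTE yq) exy d1x d1y d2x d2y /= -/a -/b; lra.
have Gp : G p = sqgap (a + 1) (degz e p).
  have [py px] : p != y /\ p != x by rewrite !(eq_sym p).
  by rewrite /G /ew g1x g2x eqxx pq (negbTE nexp) d1x d1 //= -/a; lra.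
have Gq : G q = sqgap (a + 1) (degz e q) - 2 * sqgap a (degz e q) + 2.
  have qx : q != x by rewrite eq_sym (simple_edge_neq e_simple exq).
  have qy : q != y by rewrite eq_sym.
  by rewrite /G /ew g1x g2x eqxx exq orbT d1x d1 //= -/a; lra.
have G_ge0 t : t != y -> t != p -> t != q -> 0 <= G t.
  move=> ty tp tq; rewrite /G /ew g1x g2x (negbTE tp) tq /=.
  case ext: (e x t); last by rewrite !subrr.
  have tx : t != x by rewrite eq_sym (simple_edge_neq e_simple ext).
  rewrite d1x d2x d1 // d2 // -[true%:R]/(1 : int).
  have := @sqgap_second_diff a (degz e t) (le0z_nat _) (le0z_nat _); lra.
have := ler_sum3 yp yq pq G_ge0; rewrite sumG Gy Gp Gq; lra.
Qed.

Lemma rewire_pair_gain n (e : rel 'I_n) u v w z :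
  simple_graph e -> u != w -> v != z ->
  e u v -> e v w -> ~~ e u w -> e u z -> ~~ e v z ->
  (deg e v <= deg e u)%N -> (deg e w < deg e v)%N ->
  (cM2 e)%:Z *+ 2 < (cM2 (rewire e v w u))%:Z + (cM2 (rewire e u z v))%:Z.
Proof.
move=> e_simple uw vz euv evw neuw euz nevz dvu dwv.
have uv := simple_edge_neq e_simple euv.
have evu : e v u by case: e_simple => sym _; rewrite sym.
have /= Ru := row_gain_rewire_pair e_simple uw vz euv evw neuw euz nevz.
have /= Rv := row_gain_rewire_pair e_simple vz uw evu euz nevz evw neuw.
set h1 := rewire e v w u in Ru Rv *; set h2 := rewire e u z v in Ru Rv *.
have h1_simple : simple_graph h1 by exact: rewire_simple.
have h2_simple : simple_graph h2 by exact: rewire_simple.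
have D1 := cM2_local_change e_simple h1_simple uv
  (fun x y xu xv yu yv => rewire_other e w xv xu yv yu)
  (fun x xu xv => deg_rewire_other e_simple evw neuw uw xv xu).
have D2 := cM2_local_change e_simple h2_simple uv
  (fun x y xu xv yu yv => rewire_other e z xu xv yu yv)
  (fun x xu xv => deg_rewire_other e_simple euz nevz vz xu xv).
have ew1 : ew h1 u v = sqgap (degz e u + 1) (degz e v - 1).
  by rewrite /ew /h1 rewire_to // euv orbT degz_rewire_to // degz_rewire_from.
have ew2 : ew h2 u v = sqgap (degz e u - 1) (degz e v + 1).
  by rewrite /ew /h2 rewire_from // vz euv degz_rewire_from // degz_rewire_to.
have := @sqgap_rewire_gain_pos (degz e u) (degz e v) (degz e w) (degz e z)
  (le0z_nat _) dwv dvu (le0z_nat _).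
have ew0 : ew e u v = sqgap (degz e u) (degz e v) by rewrite /ew euv.
rewrite (sqgapC (degz e v + 1)) (sqgapC (degz e v - 1)) (sqgapC (degz e v) (degz e u)) in Rv.
rewrite mulr2n; lra.
Qed.

Local Close Scope ring_scope.

Lemma exists_private_neighbor n (e : rel 'I_n) u v w : simple_graph e -> u != w ->
  e u v -> e v w -> ~~ e u w -> deg e v <= deg e u ->
  exists z, [/\ e u z, z != v & ~~ e v z].
Proof.
move=> [sym irr] uw euv evw neuw dvu.
case/boolP: [exists z, [&& e u z, z != v & ~~ e v z]].
  by case/existsP => z /and3P[euz zv nevz]; exists z.
move=> /existsPn no_private.
have sub : [set y | e u y] \subset v |: ([set y | e v y] :\ u :\ w).
  apply/subsetP => y; rewrite !inE => euy.
  have [//|yv] := eqVneq y v.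
  have yw : y != w by apply: contraNneq neuw => <-.
  have yu : y != u by apply: contraTneq euy => ->; rewrite irr.
  by move: (no_private y); rewrite euy yv yw yu /= negbK.
have := subset_leq_card sub; rewrite cardsU1.
move: dvu; rewrite /deg (cardsD1 u [set y | e v y]) (cardsD1 w ([set y | e v y] :\ u)) !inE.
rewrite (sym v u) euv evw eq_sym uw /=.
have := leq_b1 (v \notin [set y | e v y] :\ u :\ w); lia.
Qed.

Definition cM2_maximal n (e : rel 'I_n) : Prop :=
  forall h : rel 'I_n, simple_graph h -> cM2 h <= cM2 e.

Lemma cM2_maximal_closes_descending_path n (e : rel 'I_n) u v w :
  simple_graph e -> cM2_maximal e -> u != w -> e u v -> e v w ->
  deg e v <= deg e u -> deg e w < deg e v -> e u w.
Proof.
move=> e_simple e_max uw euv evw dvu dwv; apply/negPn/negP => neuw.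
have [z [euz zv nevz]] := exists_private_neighbor e_simple uw euv evw neuw dvu.
have vz : v != z by rewrite eq_sym.
have := rewire_pair_gain e_simple uw vz euv evw neuw euz nevz dvu dwv.
have := e_max _ (rewire_simple e_simple evw uw).
have := e_max _ (rewire_simple e_simple euz vz).
rewrite -!lez_nat; lia.
Qed.

Lemma cM2_maximal_add_edge n (e : rel 'I_n) u v : simple_graph e -> cM2_maximal e ->
  u != v -> ~~ e u v -> u \in Xset e -> v \in Xset e -> cM2_maximal (toggle e u v).
Proof.
move=> e_simple e_max uv neuv Xu Xv h h_simple.
exact: leq_trans (e_max h h_simple) (cM2_add_edge_ge e_simple uv neuv Xu Xv).
Qed.

Lemma cM2_maximal_closes_nonadjacent_X_path n (e : rel 'I_n) u v w :
  simple_graph e -> cM2_maximal e -> u \in Xset e -> v \in Xset e ->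
  u != v -> u != w -> ~~ e u v -> e v w ->
  deg e v <= deg e u -> deg e w < deg e v -> e u w.
Proof.
move=> e_simple e_max Xu Xv uv uw neuv evw dvu dwv.
have wv : w != v by rewrite eq_sym (simple_edge_neq e_simple evw).
have [vu wu] : v != u /\ w != u by rewrite !(eq_sym _ u).
have nevu : ~~ e v u by case: e_simple => sym _; rewrite sym.
have e'uv : toggle e u v u v by rewrite toggle_row // eqxx.
have e'vw : toggle e u v v w by rewrite toggleC toggle_row // (negbTE wu).
have := cM2_maximal_closes_descending_path (toggle_simple e_simple uv)
  (cM2_maximal_add_edge e_simple e_max uv neuv Xu Xv) uw e'uv e'vw.
rewrite toggle_row // (negbTE wv) deg_toggle_add // deg_toggleC deg_toggle_add //.
by rewrite deg_toggle_other // !ltnS; apply=> //; exact: ltnW.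
Qed.

Theorem claim5 (n : nat) (e : rel 'I_n) :
  simple_graph e ->
  (forall h : rel 'I_n, simple_graph h -> cM2 h <= cM2 e) ->
  forall u v : 'I_n, u \in Xset e -> v \in Xset e -> deg e v <= deg e u ->
  Nplus e v :&: Yset e \subset Nplus e u :&: Yset e.
Proof.
move=> e_simple e_max u v Xu Xv dvu.
apply/subsetP => w; rewrite !inE /arcF => /andP[/andP[evw dwv] ->].
rewrite (leq_trans dwv dvu) !andbT.
have [->//|uv] := eqVneq u v.
have uw : u != w by apply: contraTneq dwv => <-; rewrite -leqNgt.
have [euv|neuv] := boolP (e u v).
  exact: cM2_maximal_closes_descending_path e_simple e_max uw euv evw dvu dwv.
exact: cM2_maximal_closes_nonadjacent_X_path e_simple e_max Xu Xv uv uw neuv evw dvu dwv.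
Qed.
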